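(* Let $(H,A,C)$ be a Doi-Hopf datum. Make $D=C^{\mathrm{cop}}\otimes C$ a right $H$-module coalgebra via $(c\otimes d)\cdot h=c\otimes d\cdot h$, and consider Koppinen's algebra $\#(D,A)$. Then $V_3\subseteq\#(D,A)$ is closed under the multiplication $\bullet$, and for $\theta,\theta'\in V_3$, $$(\theta\bullet\theta')(c\otimes d)=\sum\theta(c_{(3)}\otimes d)\,\theta'(c_{(1)}\otimes c_{(2)}).$$ Every normalized element of $V_3$ is a right unit of $V_3$ (i.e. $\theta'\bullet\theta=\theta'$ for all $\theta'\in V_3$), and in particular is idempotent.
   Context: Sweedler notation $\Delta(c)=\sum c_{(1)}\otimes c_{(2)}$, $\rho(m)=\sum m_{<-1>}\otimes m_{<0>}$. Doi-Hopf datum $(H,A,C)$: $H$ bialgebra, $A$ left $H$-comodule algebra, $C$ right $H$-module coalgebra, $C$ flat over the commutative ring $k$. For a right $H$-module coalgebra $D$, Koppinen's smash product $\#(D,A)$ is $\mathrm{Hom}(D,A)$ with product $(f\bullet g)(x)=\sum f(x_{(1)})_{<0>}\,g\big(x_{(2)}\cdot f(x_{(1)})_{<-1>}\big)$ and unit $x\mapsto\varepsilon(x)1_A$; in $C^{\mathrm{cop}}\otimes C$, $\Delta(c\otimes d)=\sum(c_{(2)}\otimes d_{(1)})\otimes(c_{(1)}\otimes d_{(2)})$. $V_3$ is the set of $k$-linear $\theta:C\otimes C\to A$ such that for all $a\in A$, $c,d\in C$: $\theta(c\otimes d)a=\sum a_{<0>}\theta(c\cdot a_{<-2>}\otimes d\cdot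 a_{<-1>})$ and $\sum c_{(1)}\otimes\theta(c_{(2)}\otimes d)=\sum d_{(2)}\cdot\theta(c\otimes d_{(1)})_{<-1>}\otimes\theta(c\otimes d_{(1)})_{<0>}$. $\theta$ is normalized if $\sum\theta(c_{(1)}\otimes c_{(2)})=\varepsilon(c)1_A$. *)

(* Tensor products are not available in MathComp; elements of a tensor
   product U (x) V are represented by finite lists of pure tensors
   (Sweedler sums), and equality of such elements is tested against all
   bilinear (resp. trilinear) maps into arbitrary R-modules, which is
   exactly equality in U (x)_R V by the universal property. *)
From HB Require Import structures.
From mathcomp Require Import all_boot all_order all_algebra.
Set Implicit Arguments. Unset Strict Implicit. Unset Printing Implicit Defensive.
Import GRing.Theory.
Local Open Scope ring_scope.

Section Defs.
Variable R : comPzRingType.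

Definition islin (U V : lmodType R) (f : U -> V) : Prop :=
  forall (a : R) x y, f (a *: x + y) = a *: f x + f y.

Definition islinR (U : lmodType R) (f : U -> R) : Prop :=
  forall (a : R) x y, f (a *: x + y) = a * f x + f y.

Definition bilin (U V P : lmodType R) (g : U -> V -> P) : Prop :=
  (forall v, islin (fun u => g u v)) /\ (forall u, islin (g u)).

Definition trilin (U V W P : lmodType R) (g : U -> V -> W -> P) : Prop :=
  (forall v w, islin (fun u => g u v w)) /\ (forall u w, islin (fun v => g u v w))
  /\ (forall u v, islin (g u v)).

Definition teq2 (U V : lmodType R) (s t : seq (U * V)) : Prop :=
  forall (P : lmodType R) (g : U -> V -> P), bilin g ->
    \sum_(p <- s) g p.1 p.2 = \sum_(p <- t) g p.1 p.2.

Definition teq3 (U V W : lmodType R) (s t : seq (U * V * W)) : Prop :=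
  forall (P : lmodType R) (g : U -> V -> W -> P), trilin g ->
    \sum_(p <- s) g p.1.1 p.1.2 p.2 = \sum_(p <- t) g p.1.1 p.1.2 p.2.

Definition tscale (U V : lmodType R) (a : R) (s : seq (U * V)) : seq (U * V) :=
  [seq (a *: p.1, p.2) | p <- s].

Definition tlin (U V W : lmodType R) (f : U -> seq (V * W)) : Prop :=
  forall (a : R) x y, teq2 (f (a *: x + y)) (tscale a (f x) ++ f y).

Record coalgebra (C : lmodType R) := Coalgebra {
  cDelta : C -> seq (C * C);
  cEps : C -> R;
  cDelta_lin : tlin cDelta;
  cEps_lin : islinR cEps;
  cCoassoc : forall c,
    teq3 [seq (q.1, q.2, p.2) | p <- cDelta c, q <- cDelta p.1]
         [seq (p.1, q.1, q.2) | p <- cDelta c, q <- cDelta p.2];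
  cCounitl : forall c, \sum_(p <- cDelta c) cEps p.1 *: p.2 = c;
  cCounitr : forall c, \sum_(p <- cDelta c) cEps p.2 *: p.1 = c
}.

Record bialgebra (H : algType R) := Bialgebra {
  hco :> coalgebra H;
  hDelta_mul : forall x y : H,
    teq2 (cDelta hco (x * y))
         [seq (p.1 * q.1, p.2 * q.2) | p <- cDelta hco x, q <- cDelta hco y];
  hDelta_one : teq2 (cDelta hco 1) [:: (1 : H, 1 : H)];
  hEps_mul : forall x y : H, cEps hco (x * y) = cEps hco x * cEps hco y;
  hEps_one : cEps hco 1 = 1
}.

(* left H-comodule algebra structure on the k-algebra A:
   rho a = sum a_<-1> (x) a_<0> *)
Record comodule_algebra (H : algType R) (BH : bialgebra H) (A : algType R) :=
  ComoduleAlgebra {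
  rho : A -> seq (H * A);
  rho_lin : tlin rho;
  rho_coassoc : forall a,
    teq3 [seq (q.1, q.2, p.2) | p <- rho a, q <- cDelta BH p.1]
         [seq (p.1, q.1, q.2) | p <- rho a, q <- rho p.2];
  rho_counit : forall a, \sum_(p <- rho a) cEps BH p.1 *: p.2 = a;
  rho_mul : forall a b : A,
    teq2 (rho (a * b)) [seq (p.1 * q.1, p.2 * q.2) | p <- rho a, q <- rho b];
  rho_one : teq2 (rho 1) [:: (1 : H, 1 : A)]
}.

Record module_coalgebra (H : algType R) (BH : bialgebra H) (C : lmodType R) :=
  ModuleCoalgebra {
  mco :> coalgebra C;
  act : C -> H -> C;
  act_bilin : bilin act;
  act_mul : forall c (h h' : H), act (act c h) h' = act c (h * h');
  act_one : forall c, act c 1 = c;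
  mDelta_act : forall c h,
    teq2 (cDelta mco (act c h))
         [seq (act p.1 q.1, act p.2 q.2) | p <- cDelta mco c, q <- cDelta BH h];
  mEps_act : forall c h, cEps mco (act c h) = cEps mco c * cEps BH h
}.

(* C is flat over R: C (x)_R - preserves injective linear maps *)
Definition flat (C : lmodType R) : Prop :=
  forall (M N : lmodType R) (f : M -> N), islin f -> injective f ->
    forall s : seq (C * M),
      teq2 [seq (p.1, f p.2) | p <- s] [::] -> teq2 s [::].

Section Koppinen.
Variables (H : algType R) (BH : bialgebra H) (A : algType R)
  (CA : comodule_algebra BH A) (C : lmodType R) (MC : module_coalgebra BH C).

(* An element of Hom(C^cop (x) C, A) is represented by the bilinear map
   theta : C -> C -> A with theta c d = theta (c (x) d).
   Koppinen's product in #(D, A), D = C^cop (x) C, with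
   Delta (c (x) d) = sum (c_(2) (x) d_(1)) (x) (c_(1) (x) d_(2)) and
   (c (x) d) . h = c (x) d . h :
   (f . g)(c (x) d) = sum f(c2 (x) d1)_<0> g(c1 (x) d2 . f(c2 (x) d1)_<-1>). *)
Definition kmul (f g : C -> C -> A) : C -> C -> A :=
  fun c d => \sum_(p <- cDelta MC c) \sum_(q <- cDelta MC d)
     \sum_(r <- rho CA (f p.2 q.1)) r.2 * g p.1 (act MC q.2 r.1).

Definition kunit : C -> C -> A := fun c d => (cEps MC c * cEps MC d) *: 1.

Definition V3 (theta : C -> C -> A) : Prop :=
  [/\ bilin theta,
      forall (a : A) c d,
        theta c d * a =
        \sum_(r <- rho CA a) \sum_(s <- cDelta BH r.1)
            r.2 * theta (act MC c s.1) (act MC d s.2)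
    & forall c d,
        teq2 [seq (p.1, theta p.2 d) | p <- cDelta MC c]
             [seq (act MC q.2 r.1, r.2) | q <- cDelta MC d,
                                          r <- rho CA (theta c q.1)]].

Definition normalized (theta : C -> C -> A) : Prop :=
  forall c, \sum_(p <- cDelta MC c) theta p.1 p.2 = cEps MC c *: 1.

End Koppinen.
End Defs.

(* For theta in V3, its coaction condition turns the twisted argument
   c_(1) (x) d_(2) . theta(c_(2) (x) d_(1))_<-1> of Koppinen's product into a further
   coproduct leg of c, so that (theta . theta')(c (x) d) = sum theta(c_(3) (x) d) theta'(c_(1) (x) c_(2)).  A normalized theta on the right contributes
   eps(c_(1)), hence is a right unit.  For a in A, commuting a past theta' and then theta
   produces a sum over the fourfold coproduct of a_<-1> (coassociativity of the coaction
   and of H), and so does expanding Delta (c . h) = c_(1) . h_(1) (x) c_(2) . h_(2) on the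
   other side.  The coaction condition of theta . theta' follows from multiplicativity of
   rho and the coaction conditions of theta and then theta'. *)

From mathcomp Require Import all_boot all_order all_algebra.
From Stdlib Require Import FunctionalExtensionality.
Set Implicit Arguments. Unset Strict Implicit. Unset Printing Implicit Defensive.
Import GRing.Theory.
Local Open Scope ring_scope.

Section Linearity.
Variable R : comPzRingType.
Implicit Types U V W P : lmodType R.

Lemma islin0 U V (f : U -> V) : islin f -> f 0 = 0.
Proof.
move=> lin_f; have := lin_f 1 0 0; rewrite !scale1r addr0 => f0.
by apply: (@addrI _ (f 0)); rewrite addr0 -f0.
Qed.

Lemma islinD U V (f : U -> V) : islin f -> forall x y, f (x + y) = f x + f y.
Proof. by move=> lin_f x y; have := lin_f 1 x y; rewrite !scale1r. Qed.

Lemma islinZ U V (f : U -> V) : islin f -> forall a x, f (a *: x) = a *: f x.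
Proof. by move=> lin_f a x; have := lin_f a x 0; rewrite !addr0 (islin0 lin_f) addr0. Qed.

Lemma islin_big U V (f : U -> V) : islin f ->
  forall I (s : seq I) (F : I -> U), f (\sum_(i <- s) F i) = \sum_(i <- s) f (F i).
Proof.
move=> lin_f I s F; elim: s => [|i s IHs]; first by rewrite !big_nil (islin0 lin_f).
by rewrite !big_cons (islinD lin_f) IHs.
Qed.

Lemma islin_sum U V I (s : seq I) (F : I -> U -> V) :
  (forall i, islin (F i)) -> islin (fun x => \sum_(i <- s) F i x).
Proof.
by move=> lin_F a x y; rewrite scaler_sumr -big_split; apply: eq_bigr => i _; apply: lin_F.
Qed.

Lemma islin_comp U V W (f : U -> V) (g : V -> W) :
  islin f -> islin g -> islin (fun x => g (f x)).
Proof. by move=> lin_f lin_g a x y; rewrite lin_f lin_g. Qed.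

Lemma islin_sweedler U V W P (f : U -> seq (V * W)) (G : V -> W -> P) :
  tlin f -> bilin G -> islin (fun x => \sum_(p <- f x) G p.1 p.2).
Proof.
move=> lin_f lin_G a x y /=; rewrite (lin_f a x y P G lin_G) big_cat big_map /= scaler_sumr.
by congr (_ + _); apply: eq_bigr => p _; exact: (islinZ (lin_G.1 p.2)).
Qed.

Lemma tlin_big U V W P (f : U -> seq (V * W)) (G : V -> W -> P) :
  tlin f -> bilin G -> forall I (s : seq I) (F : I -> U),
  \sum_(p <- f (\sum_(i <- s) F i)) G p.1 p.2 =
  \sum_(i <- s) \sum_(p <- f (F i)) G p.1 p.2.
Proof.
by move=> lin_f lin_G; apply: (islin_big (f := fun x => \sum_(p <- f x) G p.1 p.2));
  apply: islin_sweedler.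
Qed.

Lemma islin_lmul (A : algType R) (b : A) : islin (fun x : A => b * x).
Proof. by move=> k x y; rewrite mulrDr scalerAr. Qed.

Lemma islin_rmul (A : algType R) (b : A) : islin (fun x : A => x * b).
Proof. by move=> k x y; rewrite mulrDl scalerAl. Qed.

Lemma islin_mull U (A : algType R) (f : U -> A) b : islin f -> islin (fun x => f x * b).
Proof. by move=> lin_f; apply: islin_comp lin_f (islin_rmul b). Qed.

Lemma islin_mulr U (A : algType R) (f : U -> A) b : islin f -> islin (fun x => b * f x).
Proof. by move=> lin_f; apply: islin_comp lin_f (islin_lmul b). Qed.

Lemma bilin_mulr U V (A : algType R) (G : U -> V -> A) (y : A) :
  bilin G -> bilin (fun u v => y * G u v).
Proof. by move=> lin_G; split=> ?; apply: islin_mulr; [apply: lin_G.1 | apply: lin_G.2]. Qed.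

Definition quadlin U V W (X : lmodType R) P (F : U -> V -> W -> X -> P) : Prop :=
  [/\ forall x y z, islin (fun w => F w x y z), forall w y z, islin (fun x => F w x y z),
      forall w x z, islin (fun y => F w x y z) & forall w x y, islin (F w x y)].

Section Coassociativity.
Variables (C P : lmodType R) (Co : coalgebra C).
Local Notation D := (cDelta Co).

Lemma sum_coassoc (F : C -> C -> C -> P) c : trilin F ->
  \sum_(p <- D c) \sum_(q <- D p.1) F q.1 q.2 p.2 =
  \sum_(p <- D c) \sum_(q <- D p.2) F p.1 q.1 q.2.
Proof. by move=> lin_F; have := cCoassoc Co c lin_F; rewrite !big_allpairs_dep. Qed.

Variable F : C -> C -> C -> C -> P.
Hypothesis lin_F : quadlin F.

(* The right-nested threefold coproduct; the suffixes below name the legs split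
   after the first coproduct. *)
Definition sum_Delta3 c :=
  \sum_(p <- D c) \sum_(q <- D p.2) \sum_(r <- D q.2) F p.1 q.1 r.1 r.2.

Lemma sum_Delta3_split c :
  \sum_(p <- D c) \sum_(q <- D p.1) \sum_(r <- D p.2) F q.1 q.2 r.1 r.2 = sum_Delta3 c.
Proof.
case: lin_F => F1 F2 F3 F4.
apply: (sum_coassoc (F := fun u v w => \sum_(r <- D w) F u v r.1 r.2)).
split; [|split] => [v w|u w|u v].
- by apply: islin_sum => r; apply: F1.
- by apply: islin_sum => r; apply: F2.
- by apply: islin_sweedler; [exact: cDelta_lin | split=> ?; [apply: F3 | apply: F4]].
Qed.

Lemma sum_Delta3_RL c :
  \sum_(p <- D c) \sum_(q <- D p.2) \sum_(r <- D q.1) F p.1 r.1 r.2 q.2 = sum_Delta3 c.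
Proof.
case: lin_F => _ F2 F3 F4.
apply: eq_bigr => p _; apply: (sum_coassoc (F := F p.1)).
by split; [|split] => ? ?; [apply: F2 | apply: F3 | apply: F4].
Qed.

Lemma sum_Delta3_LR c :
  \sum_(p <- D c) \sum_(q <- D p.1) \sum_(r <- D q.2) F q.1 r.1 r.2 p.2 = sum_Delta3 c.
Proof.
rewrite -sum_Delta3_RL; case: lin_F => F1 F2 F3 F4.
apply: (sum_coassoc (F := fun u v w => \sum_(r <- D v) F u r.1 r.2 w)).
split; [|split] => [v w|u w|u v].
- by apply: islin_sum => r; apply: F1.
- apply: (islin_sweedler (G := fun a b => F u a b w)); first exact: cDelta_lin.
  by split=> ?; [apply: F2 | apply: F3].
- by apply: islin_sum => r; apply: F4.
Qed.

Lemma sum_Delta3_LL c :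
  \sum_(p <- D c) \sum_(q <- D p.1) \sum_(r <- D q.1) F r.1 r.2 q.2 p.2 = sum_Delta3 c.
Proof.
rewrite -sum_Delta3_LR; case: lin_F => F1 F2 F3 _.
apply: eq_bigr => p _; apply: (sum_coassoc (F := fun x y z => F x y z p.2)).
by split; [|split] => ? ?; [apply: F1 | apply: F2 | apply: F3].
Qed.

End Coassociativity.
End Linearity.

Section DoiHopf.
Variables (R : comPzRingType) (H : algType R) (BH : bialgebra H) (A : algType R)
  (CA : comodule_algebra BH A) (C : lmodType R) (MC : module_coalgebra BH C).
Local Notation D := (cDelta MC).
Local Notation DH := (cDelta BH).
Local Notation rh := (rho CA).
Local Notation ac := (act MC).
Implicit Types th : C -> C -> A.

Lemma sum_Delta_act c h (P : lmodType R) (G : C -> C -> P) : bilin G ->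
  \sum_(p <- D (ac c h)) G p.1 p.2 =
  \sum_(p <- D c) \sum_(k <- DH h) G (ac p.1 k.1) (ac p.2 k.2).
Proof. by move=> lin_G; have := mDelta_act MC c h lin_G; rewrite big_allpairs_dep. Qed.

Lemma sum_rho_mul a b (P : lmodType R) (G : H -> A -> P) : bilin G ->
  \sum_(r <- rh (a * b)) G r.1 r.2 =
  \sum_(r <- rh a) \sum_(s <- rh b) G (r.1 * s.1) (r.2 * s.2).
Proof. by move=> lin_G; have := rho_mul CA a b lin_G; rewrite big_allpairs_dep. Qed.

Lemma sum_rho_coassoc a (P : lmodType R) (F : H -> H -> A -> P) : trilin F ->
  \sum_(p <- rh a) \sum_(q <- DH p.1) F q.1 q.2 p.2 =
  \sum_(p <- rh a) \sum_(q <- rh p.2) F p.1 q.1 q.2.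
Proof. by move=> lin_F; have := rho_coassoc CA a lin_F; rewrite !big_allpairs_dep. Qed.

Lemma sum_rho_Delta3 (P : lmodType R) (Phi : H -> H -> H -> H -> A -> P) :
  (forall b, quadlin (fun h1 h2 h3 h4 => Phi h1 h2 h3 h4 b)) ->
  (forall h1 h2 h3 h4, islin (Phi h1 h2 h3 h4)) ->
  forall a,
  \sum_(r <- rh a) \sum_(s <- DH r.1) \sum_(r' <- rh r.2) \sum_(s' <- DH r'.1)
     Phi s.1 s.2 s'.1 s'.2 r'.2 =
  \sum_(r <- rh a) \sum_(s <- DH r.1) \sum_(k <- DH s.1) \sum_(k' <- DH k.1)
     Phi k'.1 k'.2 k.2 s.2 r.2.
Proof.
move=> lin_PhiH lin_PhiA a.
transitivity (\sum_(r <- rh a) \sum_(r' <- rh r.2) \sum_(s <- DH r.1)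
     \sum_(s' <- DH r'.1) Phi s.1 s.2 s'.1 s'.2 r'.2).
  by apply: eq_bigr => r _; rewrite exchange_big.
rewrite -(sum_rho_coassoc a (F := fun h h' b =>
  \sum_(s <- DH h) \sum_(s' <- DH h') Phi s.1 s.2 s'.1 s'.2 b)).
  apply: eq_bigr => r _.
  by rewrite (sum_Delta3_split BH (lin_PhiH r.2)) -(sum_Delta3_LL BH (lin_PhiH r.2)).
split; [|split] => [h' b|h b|h h'].
- case: (lin_PhiH b) => F1 F2 _ _.
  apply: (islin_sweedler (G := fun u v => \sum_(s' <- DH h') Phi u v s'.1 s'.2 b)).
    exact: cDelta_lin.
  by split=> ?; apply: islin_sum => ?; [apply: F1 | apply: F2].
- case: (lin_PhiH b) => _ _ F3 F4.
  apply: islin_sum => s; apply: (islin_sweedler (G := fun u v => Phi s.1 s.2 u v b)).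
    exact: cDelta_lin.
  by split=> ?; [apply: F3 | apply: F4].
- by apply: islin_sum => s; apply: islin_sum => s'; apply: lin_PhiA.
Qed.

Definition v3mul (th th' : C -> C -> A) c d :=
  \sum_(p <- D c) \sum_(q <- D p.1) th p.2 d * th' q.1 q.2.

Lemma kmul_V3E th th' : V3 CA MC th -> bilin th' ->
  forall c d, kmul CA MC th th' c d = v3mul th th' c d.
Proof.
case=> lin_th _ coact_th lin_th' c d.
transitivity (\sum_(p <- D c) \sum_(q <- D p.2) th q.2 d * th' p.1 q.1).
  apply: eq_bigr => p _.
  have := coact_th p.2 d A (fun x a => a * th' p.1 x).
  rewrite big_map big_allpairs_dep /= => -> //.
  by split=> [a|x]; [apply: islin_mulr; apply: lin_th'.2 | apply: islin_mull].
symmetry; apply: (sum_coassoc MC (F := fun x y z => th z d * th' x y)).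
split; [|split] => ? ?.
- by apply: islin_mulr; apply: lin_th'.1.
- by apply: islin_mulr; apply: lin_th'.2.
- by apply: islin_mull; apply: lin_th.1.
Qed.

Lemma kmul_normalized_r th th' : V3 CA MC th' -> bilin th -> normalized MC th ->
  forall c d, kmul CA MC th' th c d = th' c d.
Proof.
move=> V3th' lin_th norm_th c d; rewrite kmul_V3E //.
have [lin_th' _ _] := V3th'.
transitivity (\sum_(p <- D c) cEps MC p.1 *: th' p.2 d).
  by apply: eq_bigr => p _; rewrite -mulr_sumr norm_th -scalerAr mulr1.
rewrite -{2}(cCounitl MC c) (islin_big (lin_th'.1 d)).
by apply: eq_bigr => p _; rewrite (islinZ (lin_th'.1 d)).
Qed.

Lemma v3mul_summand_bilin th th' e : bilin th -> bilin th' ->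
  bilin (fun x z => \sum_(q <- D x) th z e * th' q.1 q.2).
Proof.
move=> lin_th lin_th'; split=> [z|x].
- exact: islin_sweedler (cDelta_lin MC) (bilin_mulr _ lin_th').
- by apply: islin_sum => q; apply: islin_mull; apply: lin_th.1.
Qed.

Lemma v3mul_bilin th th' : bilin th -> bilin th' -> bilin (v3mul th th').
Proof.
move=> lin_th lin_th'; split=> [d|c].
- exact: islin_sweedler (cDelta_lin MC) (v3mul_summand_bilin d lin_th lin_th').
- by apply: islin_sum => p; apply: islin_sum => q; apply: islin_mull; apply: lin_th.2.
Qed.

Lemma v3mul_act th th' : bilin th -> bilin th' -> forall c h e,
  v3mul th th' (ac c h) e =
  \sum_(p <- D c) \sum_(k <- DH h) \sum_(q <- D p.1) \sum_(k' <- DH k.1)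
     th (ac p.2 k.2) e * th' (ac q.1 k'.1) (ac q.2 k'.2).
Proof.
move=> lin_th lin_th' c h e.
rewrite /v3mul (sum_Delta_act _ _ (v3mul_summand_bilin e lin_th lin_th')).
apply: eq_bigr => p _; apply: eq_bigr => k _.
exact: sum_Delta_act (bilin_mulr _ lin_th').
Qed.

Lemma v3mul_rho th th' (P : lmodType R) (G : H -> A -> P) : bilin G ->
  forall c e, \sum_(r <- rh (v3mul th th' c e)) G r.1 r.2 =
  \sum_(p <- D c) \sum_(q <- D p.1) \sum_(r <- rh (th p.2 e)) \sum_(s <- rh (th' q.1 q.2))
     G (r.1 * s.1) (r.2 * s.2).
Proof.
move=> lin_G c e; rewrite /v3mul (tlin_big (rho_lin CA) lin_G).
apply: eq_bigr => p _; rewrite (tlin_big (rho_lin CA) lin_G).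
by apply: eq_bigr => q _; apply: sum_rho_mul.
Qed.

Lemma v3mul_commute th th' : V3 CA MC th -> V3 CA MC th' ->
  forall (a : A) c d, v3mul th th' c d * a =
    \sum_(r <- rh a) \sum_(s <- DH r.1) r.2 * v3mul th th' (ac c s.1) (ac d s.2).
Proof.
case=> lin_th comm_th _ [lin_th' comm_th' _] a c d.
pose Phi x y z h1 h2 h3 h4 b := b * th (ac x h3) (ac d h4) * th' (ac y h1) (ac z h2).
have lin_Phi x y z : (forall b, quadlin (fun h1 h2 h3 h4 => Phi x y z h1 h2 h3 h4 b)) /\
    forall h1 h2 h3 h4, islin (Phi x y z h1 h2 h3 h4).
  split=> [b|h1 h2 h3 h4]; last by apply: islin_mull; apply: islin_mull.
  split=> h h' h''; rewrite /Phi.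
  - apply: islin_mulr; exact: islin_comp ((act_bilin MC).2 _) (lin_th'.1 _).
  - apply: islin_mulr; exact: islin_comp ((act_bilin MC).2 _) (lin_th'.2 _).
  - apply: islin_mull; apply: islin_mulr; exact: islin_comp ((act_bilin MC).2 _) (lin_th.1 _).
  - apply: islin_mull; apply: islin_mulr; exact: islin_comp ((act_bilin MC).2 _) (lin_th.2 _).
have -> : v3mul th th' c d * a =
    \sum_(p <- D c) \sum_(q <- D p.1) \sum_(r <- rh a) \sum_(s <- DH r.1)
    \sum_(k <- DH s.1) \sum_(k' <- DH k.1) Phi p.2 q.1 q.2 k'.1 k'.2 k.2 s.2 r.2.
  rewrite /v3mul mulr_suml; apply: eq_bigr => p _; rewrite mulr_suml.
  apply: eq_bigr => q _; have [lin_PhiH lin_PhiA] := lin_Phi p.2 q.1 q.2.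
  rewrite -(sum_rho_Delta3 lin_PhiH lin_PhiA) -mulrA comm_th' mulr_sumr.
  apply: eq_bigr => r _; rewrite mulr_sumr; apply: eq_bigr => s _.
  by rewrite mulrA comm_th mulr_suml; apply: eq_bigr => r' _; rewrite mulr_suml.
transitivity (\sum_(r <- rh a) \sum_(s <- DH r.1) \sum_(p <- D c) \sum_(k <- DH s.1)
    \sum_(q <- D p.1) \sum_(k' <- DH k.1) Phi p.2 q.1 q.2 k'.1 k'.2 k.2 s.2 r.2).
  transitivity (\sum_(p <- D c) \sum_(r <- rh a) \sum_(s <- DH r.1) \sum_(k <- DH s.1)
      \sum_(q <- D p.1) \sum_(k' <- DH k.1) Phi p.2 q.1 q.2 k'.1 k'.2 k.2 s.2 r.2).
    apply: eq_bigr => p _; rewrite exchange_big; apply: eq_bigr => r _.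
    rewrite exchange_big; apply: eq_bigr => s _; exact: exchange_big.
  rewrite exchange_big; apply: eq_bigr => r _; exact: exchange_big.
apply: eq_bigr => r _; apply: eq_bigr => s _.
rewrite v3mul_act // !mulr_sumr; apply: eq_bigr => p _; rewrite !mulr_sumr.
apply: eq_bigr => k _; rewrite !mulr_sumr; apply: eq_bigr => q _; rewrite !mulr_sumr.
by apply: eq_bigr => k' _; rewrite mulrA.
Qed.

Lemma sum_act_rho_v3mul th th' (P : lmodType R) (g : C -> A -> P) :
  V3 CA MC th -> bilin g -> forall c d,
  \sum_(e <- D d) \sum_(r <- rh (v3mul th th' c e.1)) g (ac e.2 r.1) r.2 =
  \sum_(p <- D c) \sum_(q <- D p.1) \sum_(u <- D p.2) \sum_(s <- rh (th' q.1 q.2))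
     g (ac u.1 s.1) (th u.2 d * s.2).
Proof.
case=> _ _ coact_th lin_g c d.
pose K (q : C * C) h b := \sum_(s <- rh (th' q.1 q.2)) g (ac h s.1) (b * s.2).
have lin_K q : bilin (K q).
  split=> ? /=; apply: islin_sum => s.
  - exact: islin_comp ((act_bilin MC).1 _) (lin_g.1 _).
  - exact: islin_comp (islin_rmul _) (lin_g.2 _).
transitivity (\sum_(e <- D d) \sum_(p <- D c) \sum_(q <- D p.1)
    \sum_(r <- rh (th p.2 e.1)) K q (ac e.2 r.1) r.2).
  apply: eq_bigr => e _.
  have lin_ge : bilin (fun h b => g (ac e.2 h) b).
    by split=> ? /=; [exact: islin_comp ((act_bilin MC).2 _) (lin_g.1 _) | exact: lin_g.2].
  rewrite (v3mul_rho _ _ lin_ge); apply: eq_bigr => p _; apply: eq_bigr => q _.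
  by apply: eq_bigr => r _; apply: eq_bigr => s _; rewrite act_mul.
rewrite exchange_big; apply: eq_bigr => p _; rewrite exchange_big; apply: eq_bigr => q _.
by have := coact_th p.2 d P (K q) (lin_K q); rewrite big_map big_allpairs_dep /= => <-.
Qed.

Lemma v3mul_coact th th' : V3 CA MC th -> V3 CA MC th' ->
  forall c d, teq2 [seq (p.1, v3mul th th' p.2 d) | p <- D c]
                   [seq (ac q.2 r.1, r.2) | q <- D d, r <- rh (v3mul th th' c q.1)].
Proof.
move=> V3th [lin_th' _ coact_th'] c d P g lin_g; have [lin_th _ _] := V3th.
rewrite big_map big_allpairs_dep /=.
pose Phi w x y z := g w (th z d * th' x y).
have lin_Phi : quadlin Phi.
  split=> [x y z|w y z|w x z|w x y]; rewrite /Phi; first exact: lin_g.1.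
  - exact: islin_comp (islin_mulr _ (lin_th'.1 _)) (lin_g.2 _).
  - exact: islin_comp (islin_mulr _ (lin_th'.2 _)) (lin_g.2 _).
  - exact: islin_comp (islin_mull _ (lin_th.1 _)) (lin_g.2 _).
pose Psi w x y z := \sum_(s <- rh (th' w x)) g (ac y s.1) (th z d * s.2).
have lin_Psi : quadlin Psi.
  have lin_g' y z : bilin (fun h b => g (ac y h) (th z d * b)).
    split=> ? /=; [exact: islin_comp ((act_bilin MC).2 y) (lin_g.1 _)
               | exact: islin_comp (islin_lmul _) (lin_g.2 _)].
  split=> [x y z|w y z|w x z|w x y]; rewrite /Psi.
  - exact: islin_comp (lin_th'.1 x) (islin_sweedler (rho_lin CA) (lin_g' y z)).
  - exact: islin_comp (lin_th'.2 w) (islin_sweedler (rho_lin CA) (lin_g' y z)).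
  - by apply: islin_sum => s; exact: islin_comp ((act_bilin MC).1 _) (lin_g.1 _).
  - by apply: islin_sum => s; exact: islin_comp (islin_mull _ (lin_th.1 _)) (lin_g.2 _).
have -> : \sum_(p <- D c) g p.1 (v3mul th th' p.2 d) = sum_Delta3 MC Phi c.
  rewrite -(sum_Delta3_RL MC lin_Phi); apply: eq_bigr => p _.
  rewrite (islin_big (lin_g.2 p.1)); apply: eq_bigr => q _.
  by rewrite (islin_big (lin_g.2 p.1)).
transitivity (sum_Delta3 MC Psi c);
  last by rewrite -(sum_Delta3_split MC lin_Psi) sum_act_rho_v3mul.
rewrite -(sum_Delta3_LL MC lin_Phi) -(sum_Delta3_LR MC lin_Psi).
apply: eq_bigr => p _; apply: eq_bigr => q _.
have lin_gp : bilin (fun x b => g x (th p.2 d * b)).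
  by split=> ? /=; [exact: lin_g.1 | exact: islin_comp (islin_lmul _) (lin_g.2 _)].
by have := coact_th' q.1 q.2 P _ lin_gp; rewrite big_map big_allpairs_dep /= => ->.
Qed.

Lemma V3_v3mul th th' : V3 CA MC th -> V3 CA MC th' -> V3 CA MC (v3mul th th').
Proof.
move=> V3th V3th'; have [lin_th _ _] := V3th; have [lin_th' _ _] := V3th'.
by split; [exact: v3mul_bilin | exact: v3mul_commute | exact: v3mul_coact].
Qed.

End DoiHopf.

Theorem lemma2p1p6 (R : comPzRingType) (H : algType R) (BH : bialgebra H)
  (A : algType R) (CA : comodule_algebra BH A)
  (C : lmodType R) (MC : module_coalgebra BH C) (Cflat : flat C) :
  (forall theta theta' : C -> C -> A,
     V3 CA MC theta -> V3 CA MC theta' ->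
     V3 CA MC (kmul CA MC theta theta') /\
     (forall c d : C,
        kmul CA MC theta theta' c d =
        \sum_(p <- cDelta MC c) \sum_(q <- cDelta MC p.1)
            theta p.2 d * theta' q.1 q.2)) /\
  (forall theta : C -> C -> A,
     V3 CA MC theta -> normalized MC theta ->
     (forall theta' : C -> C -> A, V3 CA MC theta' ->
        forall c d : C, kmul CA MC theta' theta c d = theta' c d) /\
     (forall c d : C, kmul CA MC theta theta c d = theta c d)).
Proof.
split=> [th th' V3th V3th' | th V3th norm_th].
  have [lin_th' _ _] := V3th'.
  have kmulE : kmul CA MC th th' = v3mul MC th th'.
    by do 2![apply: functional_extensionality => ?]; exact: kmul_V3E.
  by split=> [|c d]; [rewrite kmulE; exact: V3_v3mul | exact: kmul_V3E].
have [lin_th _ _] := V3th.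
by split=> [th' V3th'|]; exact: kmul_normalized_r.
Qed.
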